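(* Fix angles $\alpha_1,\alpha_2,\alpha_3\in(0,\pi/2)$ with $\alpha_1+\alpha_2+\alpha_3=\pi$. Let $H$ and $H'$ be two right-angled hexagons in the hyperbolic plane, each with a choice of long and short edges, whose tripods have the same angles $2\alpha_1,2\alpha_2,2\alpha_3$ at the center and common edge lengths $d$ and $d'$ respectively. Let $2\ell_i$ and $2\ell_i'$ denote the lengths of the long edge $s_i$ of $H$ and of $H'$ respectively. Then for all $i,j\in\{1,2,3\}$, \[ \frac{\cosh\ell_i'}{\cosh\ell_j'}=\frac{\cosh\ell_i}{\cosh\ell_j}. \] That is, with the angles $\alpha_i$ fixed, the ratios among $\cosh\ell_1,\cosh\ell_2,\cosh\ell_3$ do not depend on $d$.
   Context: A right-angled hexagon $H$ comes with a choice of three pairwise non-consecutive edges $s_1,s_2,s_3$ (long edges); the other three edges $t_1,t_2,t_3$ are the short edges, $t_i$ opposite to $s_i$. Let $\tilde l_i$ be the complete geodesic containing $t_i$, $O$ the unique point equidistant from $\tilde l_1,\tilde l_2,\tilde l_3$, and $A_i$ the foot of the perpendicular from $O$ to $\tilde l_i$. The tripod of $H$ is $OA_1\cup OA_2\cup OA_3$; its three edges have a common length $d$. For $\{i,j,m\}=\{1,2,3\}$ the angle at $O$ between $OA_j$ and $OA_m$ (on the side of $s_i$) is denoted $2\alpha_i$. Here one considers hexagons with $O$ in the interior of $H$, so that $\alpha_i<\pi/2$ and $\alpha_1+\alpha_2+\alpha_3=\pi$. *)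

(* concrete reals R. Hyperbolic plane = hyperboloid model in
   Minkowski space R^{2,1}. *)
From Stdlib Require Import Reals Lra.
Open Scope R_scope.

Record vec3 := V3 { c0 : R; c1 : R; c2 : R }.

Definition mink (x y : vec3) : R := - c0 x * c0 y + c1 x * c1 y + c2 x * c2 y.

Definition inH (x : vec3) : Prop := mink x x = -1 /\ 0 < c0 x.

Definition arcosh (t : R) : R := ln (t + sqrt (t * t - 1)).

Definition hdist (x y : vec3) : R := arcosh (- mink x y).

(* Tangent vector at p of the geodesic from p towards q
   (projection of q onto the tangent space T_p = p^perp). *)
Definition tang (p q : vec3) : vec3 :=
  V3 (c0 q + mink p q * c0 p) (c1 q + mink p q * c1 p) (c2 q + mink p q * c2 p).

Definition hangle (p q r : vec3) : R :=
  acos (mink (tang p q) (tang p r) /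
        (sqrt (mink (tang p q) (tang p q)) * sqrt (mink (tang p r) (tang p r)))).

(* Euclidean determinant of three vectors of R^3: for x,y distinct points of H,
   the sign of det3 x y z says on which side of the geodesic through x and y
   the point z lies (0 = on the geodesic). *)
Definition det3 (x y z : vec3) : R :=
  c0 x * (c1 y * c2 z - c2 y * c1 z)
  - c1 x * (c0 y * c2 z - c2 y * c0 z)
  + c2 x * (c0 y * c1 z - c1 y * c0 z).

Definition on_line (x y z : vec3) : Prop := inH z /\ det3 x y z = 0.

(* A hexagon is given by its cyclically ordered vertices v_0,...,v_5
   (index taken mod 6); its edges are e_k = [v_k, v_{k+1}]. *)
Definition hexagon := nat -> vec3.
Definition vtx (h : hexagon) (k : nat) : vec3 := h (k mod 6).

Definition right_angled_hexagon (h : hexagon) : Prop :=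
  (forall k, inH (vtx h k)) /\
  (exists s : R, (s = 1 \/ s = -1) /\
     forall k j, (k < 6)%nat -> (j < 6)%nat -> j <> k -> j <> ((k + 1) mod 6)%nat ->
       0 < s * det3 (vtx h k) (vtx h (k + 1)) (vtx h j)) /\
  (forall k, hangle (vtx h (k + 1)) (vtx h k) (vtx h (k + 2)) = PI / 2).

Definition interior_pt (h : hexagon) (O : vec3) : Prop :=
  inH O /\
  exists s : R, (s = 1 \/ s = -1) /\
    forall k j, (k < 6)%nat -> (j < 6)%nat -> j <> k -> j <> ((k + 1) mod 6)%nat ->
      0 < s * det3 (vtx h k) (vtx h (k + 1)) (vtx h j) /\
      0 < s * det3 (vtx h k) (vtx h (k + 1)) O.

(* Labeling convention (indices i = 0,1,2 stand for 1,2,3 of the paper):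
   long edge  s_i = e_{2i}   = [v_{2i}, v_{2i+1}],
   short edge t_i = e_{2i+3} = [v_{2i+3}, v_{2i+4}]  (opposite to s_i). *)
Definition short_line (h : hexagon) (i : nat) (z : vec3) : Prop :=
  on_line (vtx h (2 * i + 3)) (vtx h (2 * i + 4)) z.

(* The tripod of h: O in the interior of h, A_i the foot of the
   perpendicular from O to the complete geodesic tilde-l_i containing t_i,
   all at the common distance d from O; the angle at O between O A_j and
   O A_m ({i,j,m} = {0,1,2}, i.e. on the side of s_i) equals 2 alpha_i. *)
Definition is_tripod (h : hexagon) (O : vec3) (A : nat -> vec3) (d : R)
    (alpha : nat -> R) : Prop :=
  interior_pt h O /\
  (forall i, (i < 3)%nat ->
     short_line h i (A i) /\
     (forall y, short_line h i y -> y <> A i -> hangle (A i) O y = PI / 2) /\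
     hdist O (A i) = d) /\
  (forall i, (i < 3)%nat ->
     hangle O (A ((i + 1) mod 3)%nat) (A ((i + 2) mod 3)%nat) = 2 * alpha i).

(* Everything follows from cosh l_i = cosh d * sin alpha_i, since cosh d
   cancels from the ratios. In the hyperboloid model, the short lines through
   the endpoints of s_i are perpendicular both to s_i and to the tripod legs
   ending on them, so the normal direction of each such line can be read off
   either from s_i or from a leg. Comparing the Gram data of the two pairs of
   normals expresses cosh (2 l_i) = - <v_(2i), v_(2i+1)> through cosh d and
   the angle 2 alpha_i at O. *)
From Stdlib Require Import Reals Lra Lia Psatz Classical.
Open Scope R_scope.

Lemma mink_sym x y : mink x y = mink y x.
Proof. destruct x, y; unfold mink; simpl; ring. Qed.

Lemma mink_tangl p q y : mink (tang p q) y = mink q y + mink p q * mink p y.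
Proof. destruct p, q, y; unfold tang, mink; simpl; ring. Qed.

Lemma mink_tang p q p' q' : mink (tang p q) (tang p' q') =
  mink q q' + mink p' q' * mink q p' + mink p q * mink p q'
  + mink p q * mink p' q' * mink p p'.
Proof. destruct p, q, p', q'; unfold tang, mink; simpl; ring. Qed.

Lemma mink_tang_tang p q r : inH p -> mink (tang p q) (tang p r) = mink (tang p q) r.
Proof. intros [Hp _]. rewrite mink_tang, mink_tangl, Hp, (mink_sym q p). ring. Qed.

Lemma mink_tang_base p q : inH p -> mink (tang p q) p = 0.
Proof. intros [Hp _]. rewrite mink_tangl, Hp, (mink_sym q p). ring. Qed.

Lemma mink_tang_norm p q : inH p -> inH q -> mink (tang p q) (tang p q) = mink p q ^ 2 - 1.
Proof. intros [Hp _] [Hq _]. rewrite mink_tang, Hp, Hq, (mink_sym q p). ring. Qed.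

Lemma mink_tang_swap p q :
  inH p -> inH q -> mink (tang p q) (tang q p) = mink p q ^ 3 - mink p q.
Proof. intros [Hp _] [Hq _]. rewrite mink_tang, Hp, Hq, (mink_sym q p). ring. Qed.

Lemma det3_eq0_12 p z : det3 p p z = 0.
Proof. destruct p, z; unfold det3; simpl; ring. Qed.

Lemma det3_eq0_13 p q : det3 p q p = 0.
Proof. destruct p, q; unfold det3; simpl; ring. Qed.

Lemma det3_eq0_23 p q : det3 p q q = 0.
Proof. destruct p, q; unfold det3; simpl; ring. Qed.

Lemma det3_neq0_distinct p q z : det3 p q z <> 0 -> p <> q /\ z <> p /\ z <> q.
Proof.
  intros D; repeat split; intros ->; apply D;
    [apply det3_eq0_12 | apply det3_eq0_13 | apply det3_eq0_23].
Qed.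

(* Lagrange's identity on the hyperboloid: the defect in the reversed
   Cauchy-Schwarz inequality is a sum of squares. *)
Lemma inH_mink_defect x0 x1 x2 y0 y1 y2 :
  inH (V3 x0 x1 x2) -> inH (V3 y0 y1 y2) ->
  (x0 * y0) ^ 2 - (1 + x1 * y1 + x2 * y2) ^ 2 =
  (x1 - y1) ^ 2 + (x2 - y2) ^ 2 + (x1 * y2 - x2 * y1) ^ 2.
Proof.
  unfold inH, mink; intros [Hx _] [Hy _]; simpl in Hx, Hy.
  replace ((x0 * y0) ^ 2) with ((x0 * x0) * (y0 * y0)) by ring.
  replace (x0 * x0) with (1 + x1 * x1 + x2 * x2) by nra.
  replace (y0 * y0) with (1 + y1 * y1 + y2 * y2) by nra.
  ring.
Qed.

Lemma mink_lt_m1 x y : inH x -> inH y -> x <> y -> 1 < - mink x y.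
Proof.
  destruct x as [x0 x1 x2], y as [y0 y1 y2]; intros Hx Hy Hne.
  pose proof (inH_mink_defect _ _ _ _ _ _ Hx Hy) as E.
  destruct Hx as [Hxx Hx0], Hy as [Hyy Hy0]; unfold mink in *; simpl in *.
  assert (Hpos : 0 < (x1 - y1) ^ 2 + (x2 - y2) ^ 2).
  { destruct (Req_dec x1 y1) as [<- | e1]; [destruct (Req_dec x2 y2) as [<- | e2] |].
    - assert (x0 = y0) by nra. subst. contradiction.
    - assert (0 < (x2 - y2) ^ 2) by (rewrite <- Rsqr_pow2; apply Rsqr_pos_lt; lra). nra.
    - assert (0 < (x1 - y1) ^ 2) by (rewrite <- Rsqr_pow2; apply Rsqr_pos_lt; lra).
      pose proof (pow2_ge_0 (x2 - y2)). lra. }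
  pose proof (pow2_ge_0 (x1 * y2 - x2 * y1)).
  assert (0 < x0 * y0) by nra.
  nra.
Qed.

Lemma mink_le_m1 x y : inH x -> inH y -> 1 <= - mink x y.
Proof.
  intros Hx Hy. destruct (classic (x = y)) as [<- | Hne].
  - destruct Hx as [-> _]. lra.
  - pose proof (mink_lt_m1 x y Hx Hy Hne). lra.
Qed.

Lemma cosh_pos x : 0 < cosh x.
Proof. unfold cosh. pose proof (exp_pos x); pose proof (exp_pos (- x)). lra. Qed.

Lemma cosh_arcosh t : 1 <= t -> cosh (arcosh t) = t.
Proof.
  intros Ht. unfold cosh, arcosh.
  assert (Hs0 : 0 <= t * t - 1) by nra.
  pose proof (sqrt_pos (t * t - 1)) as Hs.
  pose proof (sqrt_sqrt _ Hs0) as Hss.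
  set (s := sqrt (t * t - 1)) in *.
  rewrite exp_Ropp, exp_ln by lra.
  field_simplify; [| lra].
  apply (Rmult_eq_reg_r (2 * t + 2 * s)); [| lra].
  unfold Rdiv. rewrite Rmult_assoc, Rinv_l by lra. nra.
Qed.

Lemma cosh_hdist x y : inH x -> inH y -> cosh (hdist x y) = - mink x y.
Proof. intros Hx Hy. apply cosh_arcosh, mink_le_m1; assumption. Qed.

Lemma cosh_double x : cosh (2 * x) = 2 * cosh x ^ 2 - 1.
Proof.
  unfold cosh.
  replace (2 * x) with (x + x) by ring. replace (- (x + x)) with (- x + - x) by ring.
  rewrite !exp_plus.
  assert (exp x * exp (- x) = 1) by (rewrite <- exp_plus, Rplus_opp_r, exp_0; reflexivity).
  nra.
Qed.

Lemma cosh_half x y : 0 < y -> cosh (2 * x) = 2 * y ^ 2 - 1 -> cosh x = y.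
Proof.
  rewrite cosh_double. intros Hy E. pose proof (cosh_pos x). nra.
Qed.

(* [acos] returns 0 or PI outside [-1, 1], so a value strictly between
   them certifies that the argument was a genuine cosine. *)
Lemma acos_inv x t : acos x = t -> 0 < t < PI -> x = cos t.
Proof.
  intros E Ht.
  assert (-1 <= x <= 1).
  { unfold acos in E. destruct (Rle_dec x (-1)); [lra |]. destruct (Rle_dec 1 x); lra. }
  rewrite <- E, cos_acos; auto.
Qed.

Lemma mink_tang_norm_pos p q : inH p -> inH q -> q <> p -> 0 < mink (tang p q) (tang p q).
Proof.
  intros Hp Hq Hne. rewrite mink_tang_norm by assumption.
  pose proof (mink_lt_m1 p q Hp Hq (not_eq_sym Hne)). nra.
Qed.

Lemma mink_tang_hangle p q r : inH p -> inH q -> inH r -> q <> p -> r <> p ->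
  0 < hangle p q r < PI ->
  mink (tang p q) (tang p r) =
  cos (hangle p q r) * (sqrt (mink (tang p q) (tang p q)) * sqrt (mink (tang p r) (tang p r))).
Proof.
  intros Hp Hq Hr Hqp Hrp Hang.
  pose proof (sqrt_lt_R0 _ (mink_tang_norm_pos p q Hp Hq Hqp)).
  pose proof (sqrt_lt_R0 _ (mink_tang_norm_pos p r Hp Hr Hrp)).
  rewrite <- (acos_inv _ (hangle p q r) eq_refl Hang). field. split; lra.
Qed.

Lemma hangle_right_orth p q r : inH p -> inH q -> inH r -> q <> p -> r <> p ->
  hangle p q r = PI / 2 -> mink (tang p q) (tang p r) = 0.
Proof.
  intros Hp Hq Hr Hqp Hrp Hright. pose proof PI_RGT_0.
  rewrite mink_tang_hangle, Hright, cos_PI2 by (try rewrite Hright; auto; lra). ring.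
Qed.

(* [a] and [b] are linearly dependent; phrased through the nondegenerate
   form [mink] so that it needs no scalar witness. *)
Definition proportional (a b : vec3) : Prop :=
  forall X Y, mink a X * mink b Y = mink a Y * mink b X.

Lemma proportional_of_orth a b p q z : det3 p q z <> 0 ->
  mink a p = 0 -> mink a q = 0 -> mink b p = 0 -> mink b q = 0 -> proportional a b.
Proof.
  destruct a as [a0 a1 a2], b as [b0 b1 b2], p as [p0 p1 p2], q as [q0 q1 q2],
    z as [z0 z1 z2]; unfold proportional, mink, det3; simpl.
  intros Hd Ha1 Ha2 Hb1 Hb2 [X0 X1 X2] [Y0 Y1 Y2]; simpl.
  set (n0 := p1 * q2 - p2 * q1); set (n1 := p2 * q0 - p0 * q2); set (n2 := p0 * q1 - p1 * q0).
  set (nn := n0 * n0 + n1 * n1 + n2 * n2).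
  assert (Hnn : nn <> 0).
  { intro E. apply Hd.
    assert (n0 = 0 /\ n1 = 0 /\ n2 = 0) as (e0 & e1 & e2) by (unfold nn in E; nra).
    transitivity (z0 * n0 + z1 * n1 + z2 * n2); [unfold n0, n1, n2; ring |].
    rewrite e0, e1, e2. ring. }
  (* a covector killing p and q is a multiple of the cross product n = p x q *)
  assert (Hcross : forall k0 k1 k2 W0 W1 W2,
    - k0 * p0 + k1 * p1 + k2 * p2 = 0 -> - k0 * q0 + k1 * q1 + k2 * q2 = 0 ->
    (- k0 * W0 + k1 * W1 + k2 * W2) * nn
    = (- k0 * n0 + k1 * n1 + k2 * n2) * (W0 * n0 + W1 * n1 + W2 * n2)).
  { intros k0 k1 k2 W0 W1 W2 Ep Eq.
    transitivity ((- k0 * W0 + k1 * W1 + k2 * W2) * nn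
      - (- k0 * q0 + k1 * q1 + k2 * q2)
        * (W0 * (n1 * p2 - n2 * p1) + W1 * (n2 * p0 - n0 * p2) + W2 * (n0 * p1 - n1 * p0))
      + (- k0 * p0 + k1 * p1 + k2 * p2)
        * (W0 * (n1 * q2 - n2 * q1) + W1 * (n2 * q0 - n0 * q2) + W2 * (n0 * q1 - n1 * q0))).
    - rewrite Ep, Eq. ring.
    - unfold nn, n0, n1, n2. ring. }
  apply (Rmult_eq_reg_r (nn * nn)); [| intro; apply Hnn; nra].
  transitivity (((- a0 * X0 + a1 * X1 + a2 * X2) * nn) * ((- b0 * Y0 + b1 * Y1 + b2 * Y2) * nn));
    [ring |].
  rewrite (Hcross a0 a1 a2 X0 X1 X2), (Hcross b0 b1 b2 Y0 Y1 Y2) by assumption.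
  transitivity (((- a0 * Y0 + a1 * Y1 + a2 * Y2) * nn) * ((- b0 * X0 + b1 * X1 + b2 * X2) * nn));
    [| ring].
  rewrite (Hcross a0 a1 a2 Y0 Y1 Y2), (Hcross b0 b1 b2 X0 X1 X2) by assumption.
  ring.
Qed.

Lemma gram_proportional a a' b b' : proportional a a' -> proportional b b' ->
  mink a b ^ 2 * mink a' a' * mink b' b' = mink a' b' ^ 2 * mink a a * mink b b.
Proof.
  intros Pa Pb.
  replace (mink a b ^ 2 * mink a' a' * mink b' b')
    with ((mink a b * mink a' a') * (mink b a * mink b' b'))
    by (rewrite (mink_sym b a); ring).
  replace (mink a' b' ^ 2 * mink a a * mink b b)
    with ((mink a a * mink a' b') * (mink b b * mink b' a'))
    by (rewrite (mink_sym b' a'); ring).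
  rewrite (Pa b a'), (Pb a b'), (Pa a b'), (Pb b a').
  rewrite (mink_sym a' a), (mink_sym b' b), (mink_sym b' a), (mink_sym b a'). ring.
Qed.

Lemma tripod_normals O Aa Ab K al :
  inH O -> inH Aa -> inH Ab -> mink O Aa = - K -> mink O Ab = - K -> 1 < K ->
  hangle O Aa Ab = 2 * al -> 0 < al < PI / 2 ->
  mink (tang Aa O) (tang Ab O) = (K ^ 2 - 1) * (1 - 2 * K ^ 2 * sin al ^ 2).
Proof.
  intros HO HA HB EA EB HK Hang Hal. pose proof PI_RGT_0.
  assert (Aa <> O /\ Ab <> O) as [nA nB]
    by (destruct HO as [HOO _]; split; intros ->; lra).
  pose proof (mink_tang_hangle O Aa Ab HO HA HB nA nB ltac:(rewrite Hang; lra)) as Hcos.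
  rewrite !mink_tang_norm, EA, EB, sqrt_sqrt, Hang, cos_2a_sin in Hcos by (auto; nra).
  destruct HO as [HOO _], HA as [HAA _], HB as [HBB _].
  rewrite mink_tang, HOO, (mink_sym Aa O), EA, EB in Hcos.
  rewrite mink_tang, HOO, (mink_sym Aa O), (mink_sym Ab O), EA, EB.
  assert (EP : mink Aa Ab = (K ^ 2 - 1) * (1 - 2 * sin al * sin al) - K ^ 2) by lra.
  rewrite EP. ring.
Qed.

Lemma long_edge_mink v w a b N M :
  inH v -> inH w -> v <> w ->
  proportional (tang v w) a -> proportional (tang w v) b ->
  mink a a = N -> mink b b = N -> mink a b = N * M -> 0 < N -> M < 1 ->
  mink v w = M.
Proof.
  intros Hv Hw Hvw Pa Pb Ea Eb Eab HN HM.
  pose proof (gram_proportional _ _ _ _ Pa Pb) as G.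
  rewrite Ea, Eb, Eab, mink_tang_swap, (mink_tang_norm v w), (mink_tang_norm w v),
    (mink_sym w v) in G by assumption.
  pose proof (mink_lt_m1 v w Hv Hw Hvw) as Hc.
  set (c := mink v w) in *.
  assert (0 < c ^ 2 - 1) by nra.
  assert (Hc2 : 0 < (c ^ 2 - 1) ^ 2 * N ^ 2) by (apply Rmult_lt_0_compat; apply pow_lt; lra).
  assert (c ^ 2 = M ^ 2).
  { apply (Rmult_eq_reg_r ((c ^ 2 - 1) ^ 2 * N ^ 2)); [| lra].
    transitivity ((c ^ 3 - c) ^ 2 * N * N); [ring |].
    rewrite G. ring. }
  assert (Hfac : (c - M) * (c + M) = 0) by nra.
  destruct (Rmult_integral _ _ Hfac); lra.
Qed.

Lemma foot_orth P Q O A y : inH O -> O <> A -> on_line P Q A ->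
  (forall y, on_line P Q y -> y <> A -> hangle A O y = PI / 2) ->
  on_line P Q y -> mink (tang A O) y = 0.
Proof.
  intros HO nOA HA Hperp Hy.
  destruct (classic (y = A)) as [-> | nyA].
  - apply mink_tang_base, HA.
  - rewrite <- mink_tang_tang by apply HA.
    apply hangle_right_orth; auto; [apply HA | apply Hy].
Qed.

Lemma right_corner_orth p q r : inH p -> inH q -> inH r -> q <> p -> r <> p ->
  hangle p q r = PI / 2 -> mink (tang p r) q = 0.
Proof.
  intros Hp Hq Hr Hqp Hrp Hright.
  rewrite <- mink_tang_tang, mink_sym by assumption.
  apply hangle_right_orth; assumption.
Qed.

(* The tangent of [v, w] at [v] and the leg direction at [Aa] are both
   orthogonal to [u] and [v], hence proportional; likewise at [w] and [Ab]. *)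
Lemma long_edge_cosh O Aa Ab u v w u' d al l :
  inH O -> inH u -> inH v -> inH w -> inH u' ->
  on_line u v Aa -> (forall y, on_line u v y -> y <> Aa -> hangle Aa O y = PI / 2) ->
  hdist O Aa = d ->
  on_line w u' Ab -> (forall y, on_line w u' y -> y <> Ab -> hangle Ab O y = PI / 2) ->
  hdist O Ab = d ->
  det3 u v O <> 0 -> det3 w u' O <> 0 -> det3 u v w <> 0 -> det3 w u' v <> 0 ->
  hangle v u w = PI / 2 -> hangle w v u' = PI / 2 ->
  hangle O Aa Ab = 2 * al -> 0 < al < PI / 2 -> hdist v w = 2 * l ->
  cosh l = cosh d * sin al.
Proof.
  intros HO Hu Hv Hw Hu' HAa PerpA dA HAb PerpB dB DA DB Duvw Dwuv Rv Rw Hang Hal Hl.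
  pose proof PI_RGT_0.
  set (K := cosh d).
  assert (nA : O <> Aa) by (intros ->; apply DA, HAa).
  assert (nB : O <> Ab) by (intros ->; apply DB, HAb).
  assert (EA : mink O Aa = - K) by (unfold K; rewrite <- dA, cosh_hdist; [ring | | apply HAa]; auto).
  assert (EB : mink O Ab = - K) by (unfold K; rewrite <- dB, cosh_hdist; [ring | | apply HAb]; auto).
  assert (HK : 1 < K) by (pose proof (mink_lt_m1 O Aa HO (proj1 HAa) nA); lra).
  destruct (det3_neq0_distinct _ _ _ Duvw) as (nuv & nwu & nwv).
  destruct (det3_neq0_distinct _ _ _ Dwuv) as (nwu' & _ & nvu').
  assert (Pa : proportional (tang v w) (tang Aa O)).
  { apply (proportional_of_orth _ _ u v w Duvw).
    - apply right_corner_orth; auto.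
    - apply mink_tang_base; assumption.
    - apply (foot_orth u v); auto. split; [assumption | apply det3_eq0_13].
    - apply (foot_orth u v); auto. split; [assumption | apply det3_eq0_23]. }
  assert (Pb : proportional (tang w v) (tang Ab O)).
  { apply (proportional_of_orth _ _ w u' v Dwuv).
    - apply mink_tang_base; assumption.
    - rewrite <- mink_tang_tang by assumption.
      apply hangle_right_orth; auto using not_eq_sym.
    - apply (foot_orth w u'); auto. split; [assumption | apply det3_eq0_13].
    - apply (foot_orth w u'); auto. split; [assumption | apply det3_eq0_23]. }
  assert (Hsin : 0 < sin al) by (apply sin_gt_0; lra).
  assert (Hvw : mink v w = 1 - 2 * K ^ 2 * sin al ^ 2).
  { apply (long_edge_mink v w _ _ (K ^ 2 - 1) _ Hv Hw (not_eq_sym nwv) Pa Pb).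
    - rewrite mink_tang_norm, mink_sym, EA by (apply HAa || assumption). ring.
    - rewrite mink_tang_norm, mink_sym, EB by (apply HAb || assumption). ring.
    - apply tripod_normals; auto; [apply HAa | apply HAb].
    - nra.
    - assert (0 < K ^ 2 * sin al ^ 2) by (apply Rmult_lt_0_compat; apply pow_lt; lra).
      lra. }
  apply cosh_half.
  - apply Rmult_lt_0_compat; lra.
  - rewrite <- Hl, cosh_hdist, Hvw by assumption. ring.
Qed.

Lemma hexagon_det_neq0 h : right_angled_hexagon h ->
  forall k j, (k < 6)%nat -> (j < 6)%nat -> j <> k -> j <> ((k + 1) mod 6)%nat ->
  det3 (vtx h k) (vtx h (k + 1)) (vtx h j) <> 0.
Proof.
  intros [_ [[s [Hs Hconv]] _]] k j Hk Hj Hjk Hjk1 E.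
  pose proof (Hconv k j Hk Hj Hjk Hjk1) as Hpos. rewrite E in Hpos. lra.
Qed.

Lemma interior_det_neq0 h O : interior_pt h O ->
  forall k, (k < 6)%nat -> det3 (vtx h k) (vtx h (k + 1)) O <> 0.
Proof.
  intros [_ [s [Hs Hint]]] k Hk E.
  assert (((k + 3) mod 6 < 6)%nat /\ (k + 3) mod 6 <> k /\
          (k + 3) mod 6 <> ((k + 1) mod 6)%nat) as (Hj & Hjk & Hjk1)
    by (destruct k as [|[|[|[|[|[|k]]]]]]; simpl; lia).
  destruct (Hint k _ Hk Hj Hjk Hjk1) as [_ Hpos]. rewrite E in Hpos. lra.
Qed.

(* Each case instantiates [long_edge_cosh] at the long edge
   s_i = [v_(2i), v_(2i+1)], between the short lines of t_(i+1) and t_(i+2);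
   all indices are literal, so [vtx] reduces modulo 6 by conversion. *)
Lemma hexagon_long_edge_cosh h O A d alpha l :
  (forall i, (i < 3)%nat -> 0 < alpha i < PI / 2) ->
  right_angled_hexagon h -> is_tripod h O A d alpha ->
  (forall i, (i < 3)%nat -> hdist (vtx h (2 * i)) (vtx h (2 * i + 1)) = 2 * l i) ->
  forall i, (i < 3)%nat -> cosh (l i) = cosh d * sin (alpha i).
Proof.
  intros Hal Hh [Hint [Hfeet Hang]] Hlen i Hi.
  pose proof Hh as [Hin [_ Hright]].
  destruct i as [|[|[|i]]]; [| | | lia];
    [ apply (long_edge_cosh O (A 1%nat) (A 2%nat) (vtx h 5) (vtx h 0) (vtx h 1) (vtx h 2))
    | apply (long_edge_cosh O (A 2%nat) (A 0%nat) (vtx h 1) (vtx h 2) (vtx h 3) (vtx h 4))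
    | apply (long_edge_cosh O (A 0%nat) (A 1%nat) (vtx h 3) (vtx h 4) (vtx h 5) (vtx h 0)) ];
  lazymatch goal with
    | |- inH O => apply Hint
    | |- inH _ => apply Hin
    | |- on_line _ _ (A ?j) => exact (proj1 (Hfeet j ltac:(lia)))
    | |- forall y, _ -> y <> A ?j -> _ => exact (proj1 (proj2 (Hfeet j ltac:(lia))))
    | |- hdist O (A ?j) = d => exact (proj2 (proj2 (Hfeet j ltac:(lia))))
    | |- det3 (vtx _ ?k) _ O <> 0 => exact (interior_det_neq0 h O Hint k ltac:(lia))
    | |- det3 (vtx _ ?k) _ (vtx _ ?j) <> 0 => apply (hexagon_det_neq0 h Hh k j); simpl; lia
    | |- hangle (vtx _ _) (vtx _ ?k) _ = PI / 2 => exact (Hright k)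
    | |- _ = 2 * alpha ?i => exact (Hang i ltac:(lia))
    | |- 0 < alpha ?i < _ => exact (Hal i ltac:(lia))
    | |- _ = 2 * l ?i => exact (Hlen i ltac:(lia))
    end.
Qed.

Theorem mainTheorem3 (alpha : nat -> R)
  (H H' : hexagon) (O O' : vec3) (A A' : nat -> vec3) (d d' : R)
  (l l' : nat -> R) :
  (forall i, (i < 3)%nat -> 0 < alpha i < PI / 2) ->
  alpha 0%nat + alpha 1%nat + alpha 2%nat = PI ->
  right_angled_hexagon H -> right_angled_hexagon H' ->
  is_tripod H O A d alpha -> is_tripod H' O' A' d' alpha ->
  (forall i, (i < 3)%nat -> hdist (vtx H (2 * i)) (vtx H (2 * i + 1)) = 2 * l i) ->
  (forall i, (i < 3)%nat -> hdist (vtx H' (2 * i)) (vtx H' (2 * i + 1)) = 2 * l' i) ->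
  forall i j, (i < 3)%nat -> (j < 3)%nat ->
    cosh (l' i) / cosh (l' j) = cosh (l i) / cosh (l j).
Proof.
  intros Hal _ HH HH' HT HT' Hl Hl' i j Hi Hj.
  rewrite !(hexagon_long_edge_cosh H O A d alpha l Hal HH HT Hl),
    !(hexagon_long_edge_cosh H' O' A' d' alpha l' Hal HH' HT' Hl') by assumption.
  pose proof (cosh_pos d); pose proof (cosh_pos d').
  assert (0 < sin (alpha j)) by (pose proof (Hal j Hj); apply sin_gt_0; lra).
  field. lra.
Qed.
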